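(* Let $m\in\mathbb{N}$ and let $\{\{a_1,\dots,a_m\},\{b_1,\dots,b_m\}\}$ be an $m+m$ sum-and-distance system (non-inclusive or inclusive). Then \[\sum_{j=1}^m(a_j^2+b_j^2)=\begin{cases}\frac{1}{3!}(2m)\big((2m)^4-1\big) & \text{in the non-inclusive case},\\[2pt] \frac{1}{4!}(2m+1)\big((2m+1)^4-1\big) & \text{in the inclusive case}.\end{cases}\]
   Context: For positive integers $a_1<\dots<a_m$, $b_1<\dots<b_m$, the pair $\{\{a_1,\dots,a_m\},\{b_1,\dots,b_m\}\}$ is an $m+m$ non-inclusive sum-and-distance system if $\{a_j+b_k,\ |a_j-b_k| : j,k\in\{1,\dots,m\}\}=\{1,3,5,\dots,4m^2-1\}$, and an $m+m$ inclusive sum-and-distance system if $\{a_j,\ b_k,\ a_j+b_k,\ |a_j-b_k| : j,k\in\{1,\dots,m\}\}=\{1,2,\dots,2m(m+1)\}$. *)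

From mathcomp Require Import all_boot.
Set Implicit Arguments. Unset Strict Implicit. Unset Printing Implicit Defensive.

Definition absdiff (x y : nat) : nat := maxn x y - minn x y.

Definition incr_pos (m : nat) (a : seq nat) : Prop :=
  size a = m /\ sorted ltn a /\ all (fun x => 0 < x) a.

Definition sd_values (a b : seq nat) : pred nat :=
  fun x => has (fun aj => has (fun bk => (x == aj + bk) || (x == absdiff aj bk)) b) a.

Definition nonincl_SDS (m : nat) (a b : seq nat) : Prop :=
  incr_pos m a /\ incr_pos m b /\
  forall x, sd_values a b x = (odd x && (x < 4 * m ^ 2)).

Definition incl_SDS (m : nat) (a b : seq nat) : Prop :=
  incr_pos m a /\ incr_pos m b /\
  forall x, ((x \in a) || (x \in b) || sd_values a b x) = (0 < x <= 2 * m * (m + 1)).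

Definition sumsq (a b : seq nat) : nat := \sum_(x <- a) x ^ 2 + \sum_(x <- b) x ^ 2.

From mathcomp Require Import all_boot zify ring.

Set Implicit Arguments.
Unset Strict Implicit.
Unset Printing Implicit Defensive.

(* The list of the 2m^2 numbers a_j + b_k and |a_j - b_k| has the same size as
   the value set, so it enumerates that set without repetition. Since
   (x + y)^2 + (x - y)^2 = 2 (x^2 + y^2), its sum of squares is 2m times the
   sum of squares of the system, and comparing with the sum of the squares of
   the odd numbers below 4m^2 (resp. of 1, ..., 2m(m+1), which also contains
   the a_j and b_k) gives the closed forms. *)

Definition sd_list (a b : seq nat) : seq nat :=
  [seq x + y | x <- a, y <- b] ++ [seq absdiff x y | x <- a, y <- b].

Lemma mem_sd_list a b x : (x \in sd_list a b) = sd_values a b x.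
Proof.
rewrite /sd_values mem_cat; apply/idP/idP.
- case/orP=> /allpairsP [[i j] /= [ai bj ->]]; apply/hasP; exists i => //;
  apply/hasP; exists j => //; by rewrite eqxx ?orbT.
- case/hasP=> i ai /hasP [j bj] /orP [] /eqP ->; apply/orP;
  [left | right]; apply/allpairsP; by exists (i, j).
Qed.

Lemma size_sd_list a b : size (sd_list a b) = 2 * (size a * size b).
Proof. by rewrite size_cat !size_allpairs addnn mul2n. Qed.

Lemma sqrnD_absdiff x y : (x + y) ^ 2 + absdiff x y ^ 2 = 2 * (x ^ 2 + y ^ 2).
Proof.
wlog le_xy : x y / x <= y.
  move=> sym; case: (leqP x y) => [le_xy | /ltnW le_yx]; first exact: sym.
  by rewrite (addnC x y) /absdiff maxnC minnC (addnC (x ^ 2)) sym.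
have [d ->] : exists d, y = x + d by exists (y - x); lia.
have -> : absdiff x (x + d) = d by rewrite /absdiff; lia.
ring.
Qed.

Lemma sum_sqr_sd_list a b :
  \sum_(x <- sd_list a b) x ^ 2 =
  2 * (size b * \sum_(x <- a) x ^ 2 + size a * \sum_(y <- b) y ^ 2).
Proof.
rewrite big_cat !big_allpairs_dep /= -big_split /=.
under eq_bigr => x _ do
  rewrite -big_split /= (eq_bigr _ (fun y _ => sqrnD_absdiff x y)) -(big_distrr 2) /=.
rewrite -(big_distrr 2) /=; congr (2 * _).
under eq_bigr => x _ do rewrite big_split /= big_const_seq count_predT iter_addn_0.
by rewrite big_split /= -big_distrl /= big_const_seq count_predT iter_addn_0; ring.
Qed.

Lemma sum_sqr_sd_list_sumsq m a b : size a = m -> size b = m ->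
  \sum_(x <- sd_list a b) x ^ 2 = 2 * m * sumsq a b.
Proof. by move=> <- size_b; rewrite sum_sqr_sd_list size_b /sumsq; ring. Qed.

Lemma perm_eq_uniq_size (T : eqType) (s t : seq T) :
  uniq t -> s =i t -> size s <= size t -> perm_eq s t.
Proof.
move=> t_uniq eq_st le_st; apply: uniq_perm => //.
by apply: (leq_size_uniq t_uniq) => // x; rewrite eq_st.
Qed.

Definition odds (n : nat) : seq nat := [seq 2 * i + 1 | i <- iota 0 n].

Lemma mem_odds n x : (x \in odds n) = odd x && (x < 2 * n).
Proof.
apply/mapP/idP.
- by case=> i; rewrite mem_iota => lt_in ->; rewrite oddD oddM /=; lia.
- case/andP=> odd_x lt_x; have := odd_double_half x; rewrite odd_x => def_x.
  by exists x./2; [rewrite mem_iota |]; lia.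
Qed.

Lemma odds_uniq n : uniq (odds n).
Proof. by rewrite map_inj_uniq ?iota_uniq // => i j; lia. Qed.

Lemma size_odds n : size (odds n) = n.
Proof. by rewrite size_map size_iota. Qed.

Lemma sum_sqr_odds n : 3 * \sum_(x <- odds n) x ^ 2 + n = 4 * n ^ 3.
Proof.
rewrite big_map; elim: n => [|n IHn]; first by rewrite big_nil.
by rewrite -[n.+1]addn1 iotaD big_cat big_seq1 /= mulnDr; nia.
Qed.

Lemma sum_sqr_iota1 n : 6 * \sum_(x <- iota 1 n) x ^ 2 = n * (n + 1) * (2 * n + 1).
Proof.
elim: n => [|n IHn]; first by rewrite big_nil.
by rewrite -[n.+1]addn1 iotaD big_cat big_seq1 /= mulnDr IHn; nia.
Qed.

Lemma nonincl_SDS_sumsq m a b :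
  nonincl_SDS m a b -> 6 * sumsq a b = 2 * m * ((2 * m) ^ 4 - 1).
Proof.
case=> [[size_a _] [[size_b _] values_ab]].
have [m0 | m_gt0] := posnP m.
  by move: size_a size_b; rewrite m0 /sumsq => /size0nil -> /size0nil ->; rewrite !big_nil.
have perm_odds : perm_eq (sd_list a b) (odds (2 * m ^ 2)).
  apply: perm_eq_uniq_size; first exact: odds_uniq.
  - by move=> x; rewrite mem_sd_list values_ab mem_odds mulnA.
  - by rewrite size_sd_list size_odds size_a size_b.
have := sum_sqr_odds (2 * m ^ 2).
rewrite -(perm_big _ perm_odds) (sum_sqr_sd_list_sumsq size_a size_b).
set S := sumsq a b => sum_eq.
have three_S : 3 * S + m = 16 * m ^ 5.
  apply/eqP; rewrite -(@eqn_pmul2l (2 * m)) ?muln_gt0 //; apply/eqP.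
  by transitivity (3 * (2 * m * S) + 2 * m ^ 2); [ring | rewrite sum_eq; ring].
have -> : 2 * m * ((2 * m) ^ 4 - 1) = 2 * (16 * m ^ 5) - 2 * m.
  by rewrite mulnBr muln1; congr (_ - _); ring.
lia.
Qed.

Lemma incl_SDS_sumsq m a b :
  incl_SDS m a b -> 24 * sumsq a b = (2 * m + 1) * ((2 * m + 1) ^ 4 - 1).
Proof.
case=> [[size_a _] [[size_b _] values_ab]].
set N := 2 * m * (m + 1).
have perm_iota : perm_eq (a ++ b ++ sd_list a b) (iota 1 N).
  apply: perm_eq_uniq_size; first exact: iota_uniq.
  - by move=> x; rewrite mem_cat (mem_cat x b) mem_sd_list orbA values_ab mem_iota; lia.
  - by rewrite size_cat (size_cat b) size_sd_list size_iota size_a size_b; lia.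
have := sum_sqr_iota1 N.
rewrite -(perm_big _ perm_iota) big_cat /= big_cat /= addnA -/(sumsq a b).
rewrite (sum_sqr_sd_list_sumsq size_a size_b).
set S := sumsq a b => sum_eq.
have sqr_odd_m : 2 * N + 1 = (2 * m + 1) ^ 2 by rewrite /N; ring.
have six_S : 6 * S = N * (N + 1) * (2 * m + 1).
  apply/eqP; rewrite -(@eqn_pmul2l (2 * m + 1)) ?addn1 //; apply/eqP.
  by transitivity (6 * (S + 2 * m * S)); [ring | rewrite sum_eq sqr_odd_m; ring].
have -> : (2 * m + 1) ^ 4 = 4 * (N * (N + 1)) + 1 by rewrite /N; ring.
by rewrite addnK -[24]/(4 * 6) -mulnA six_S; ring.
Qed.

Theorem theorem6 (m : nat) (a b : seq nat) :
  (nonincl_SDS m a b ->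
     sumsq a b = (2 * m) * ((2 * m) ^ 4 - 1) %/ 3`!) /\
  (incl_SDS m a b ->
     sumsq a b = (2 * m + 1) * ((2 * m + 1) ^ 4 - 1) %/ 4`!).
Proof.
by split=> [/nonincl_SDS_sumsq | /incl_SDS_sumsq] <-; rewrite mulKn.
Qed.
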